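(* Let $\mathcal E=\{p_1,\dots,p_n\}\subseteq\mathbb K[x,y_1,\dots,y_n]$ (regarded as a vector of polynomials), let $\bar\sigma=(\sigma_1,\dots,\sigma_n)\in\Sigma^n$ be a stream solution of $\mathcal E$, and let $\bar r_0=\bar\sigma(0)$. Then $$\big(\nabla^{\eth}_{\bar y}\mathcal E\big)(X,\bar r_0,\bar\sigma)\cdot\bar\sigma'^{T}+\Big(\frac{\eth\mathcal E}{\eth x}(X,\bar\sigma)\Big)^{T}=0 .$$
   Context: Streams $\Sigma=\mathbb K^\omega$ over a field $\mathbb K$ of characteristic $0$ with pointwise sum, convolution product $(\sigma\times\tau)(i)=\sum_{j=0}^{i}\sigma(j)\tau(i-j)$, $X=(0,1,0,\dots)$, scalars as $(r,0,0,\dots)$, stream derivative $\sigma'(i)=\sigma(i+1)$. A stream solution of a finite set $\mathcal E$ of polynomials is $\bar\sigma\in\Sigma^n$ with $p(X,\bar\sigma)=0$ for all $p\in\mathcal E$ (substituting $x\mapsto X$, $y_i\mapsto\sigma_i$). Syntactic stream derivative of $p\in\mathbb K[x,\bar y]$: with new indeterminates $y_{0i},y_i'$, $y_0:=x$, $y_{00}:=0$, order $y_0<\dots<y_n$, $\min(m)$ the least variable of monomial $m\ne1$: $(1)'=0$, $(x)'=1$, $(y_i)'=y_i'$, $(y_im)'=y_i'm+y_{0i}(m)'$ when $m\ne1$, $y_i=\min(y_im)$, extended linearly. Writing uniquely $p'=q_0+\sum_i q_iy_i'$ with $q_j\in\mathbb K[x,\bar y_0,\bar y]$, set $\frac{\eth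 p}{\eth x}:=q_0$ (a polynomial in $x,\bar y$ only) and $\frac{\eth p}{\eth y_i}:=q_i$. $\nabla^{\eth}_{\bar y}\mathcal E$ is the $n\times n$ matrix whose $i$-th row is $(\frac{\eth p_i}{\eth y_1},\dots,\frac{\eth p_i}{\eth y_n})$, and $\frac{\eth\mathcal E}{\eth x}:=(\frac{\eth p_1}{\eth x},\dots,\frac{\eth p_n}{\eth x})$. Evaluation at $(X,\bar r_0,\bar\sigma)$ substitutes $x\mapsto X$, $y_{0i}\mapsto r_{0i}$, $y_i\mapsto\sigma_i$. *)

From HB Require Import structures.
From mathcomp Require Import all_boot all_algebra.
From mathcomp Require boolp.
From mathcomp.multinomials Require Import mpoly.
From Stdlib Require Import FunctionalExtensionality.

Set Implicit Arguments.
Unset Strict Implicit.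
Unset Printing Implicit Defensive.

Import GRing.Theory.
Local Open Scope ring_scope.

Definition stream (K : Type) := nat -> K.

Section StreamRing.
Variable K : comNzRingType.

HB.instance Definition _ := boolp.gen_eqMixin (stream K).
HB.instance Definition _ := boolp.gen_choiceMixin (stream K).

Definition szero : stream K := fun _ => 0.
Definition sopp (s : stream K) : stream K := fun i => - s i.
Definition sadd (s t : stream K) : stream K := fun i => s i + t i.
Definition smul (s t : stream K) : stream K :=
  fun i => \sum_(j < i.+1) s j * t (i - j)%N.
Definition sconst (r : K) : stream K := fun i => if i == 0%N then r else 0.
Definition sone : stream K := sconst 1.

Lemma saddA : associative sadd.
Proof. by move=> s t u; apply: functional_extensionality => i; rewrite /sadd addrA. Qed.
Lemma saddC : commutative sadd.
Proof. by move=> s t; apply: functional_extensionality => i; rewrite /sadd addrC. Qed.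
Lemma sadd0 : left_id szero sadd.
Proof. by move=> s; apply: functional_extensionality => i; rewrite /sadd add0r. Qed.
Lemma saddN : left_inverse szero sopp sadd.
Proof. by move=> s; apply: functional_extensionality => i; rewrite /sadd /sopp addNr. Qed.

HB.instance Definition _ := GRing.isZmodule.Build (stream K) saddA saddC sadd0 saddN.

Definition strunc (k : nat) (s : stream K) : {poly K} := \poly_(j < k) s j.

Lemma smul_poly s t i : smul s t i = (strunc i.+1 s * strunc i.+1 t)`_i.
Proof.
rewrite coefM /smul /=; apply: (@eq_bigr K 0 +%R) => j _.
have hj : (i - j < i.+1)%N by rewrite ltnS leq_subr.
by rewrite /strunc coef_poly (ltn_ord j) coef_poly hj.
Qed.

Lemma coefM_loc (p q p' q' : {poly K}) i :
  (forall j, (j <= i)%N -> p`_j = p'`_j) -> (forall j, (j <= i)%N -> q`_j = q'`_j) ->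
  (p * q)`_i = (p' * q')`_i.
Proof.
move=> hp hq; rewrite !coefM; apply: (@eq_bigr K 0 +%R) => j _.
rewrite hp; last by rewrite -ltnS.
by rewrite hq // leq_subr.
Qed.

Lemma strunc_mul s t i j : (j <= i)%N ->
  (strunc i.+1 (smul s t))`_j = (strunc i.+1 s * strunc i.+1 t)`_j.
Proof.
move=> hj; rewrite /strunc coef_poly ltnS hj smul_poly.
by apply: coefM_loc => k hk; rewrite /strunc !coef_poly !ltnS hk (leq_trans hk hj).
Qed.

Lemma smulA : associative smul.
Proof.
move=> s t u; apply: functional_extensionality => i.
rewrite [LHS]smul_poly [RHS]smul_poly.
rewrite (@coefM_loc _ _ (strunc i.+1 s) (strunc i.+1 t * strunc i.+1 u) i);
  [|by []|by move=> j hj; rewrite strunc_mul].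
rewrite [RHS](@coefM_loc _ _ (strunc i.+1 s * strunc i.+1 t) (strunc i.+1 u) i);
  [|by move=> j hj; rewrite strunc_mul|by []].
by rewrite mulrA.
Qed.

Lemma smulC : commutative smul.
Proof.
move=> s t; apply: functional_extensionality => i.
by rewrite [LHS]smul_poly [RHS]smul_poly mulrC.
Qed.

Lemma smul1 : left_id sone smul.
Proof.
move=> s; apply: functional_extensionality => i.
rewrite smul_poly; have -> : strunc i.+1 sone = 1.
  apply/polyP => j; rewrite /strunc coef_poly coef1 /sone /sconst.
  by case: j => [|j] //=; case: ifP.
by rewrite mul1r /strunc coef_poly ltnSn.
Qed.

Lemma smulDl : left_distributive smul sadd.
Proof.
move=> s t u; apply: functional_extensionality => i.
rewrite /smul /sadd /= -big_split /=; apply: (@eq_bigr K 0 +%R) => j _.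
by rewrite mulrDl.
Qed.

Lemma sone_neq0 : sone != szero.
Proof.
apply/eqP => /(congr1 (fun f => f 0%N)); rewrite /sone /sconst /szero /=.
by move/eqP; rewrite oner_eq0.
Qed.

HB.instance Definition _ :=
  GRing.Zmodule_isComNzRing.Build (stream K) smulA smulC smul1 smulDl sone_neq0.

Definition sX : stream K := fun i => if i == 1%N then 1 else 0.
Definition sder (s : stream K) : stream K := fun i => s i.+1.

End StreamRing.

(* Polynomials of K[x, y_1..y_n] are {mpoly K[n.+1]}: variable 0 is x,
   variable (lift ord0 i) is y_(i+1).
   Polynomials of K[x, y_01..y_0n, y_1..y_n] are {mpoly K[n.+1 + n]}:
   variable (lshift n v) is the variable v of K[x, ybar] (x or y_i), and
   variable (rshift n.+1 i) is y_0(i+1).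
   The derivative p' = q_0 + sum_i q_i y_i' (p' is linear in the y_i') is
   represented by the row vector (q_0, q_1, ..., q_n) with entries in
   K[x, ybar_0, ybar]; component v : 'I_n.+1 holds the coefficient of y_v'
   (with the convention y_0' = x' = 1 for component 0). *)

Section SynDeriv.
Variables (K : fieldType) (n : nat).

Local Notation N := (n.+1 + n)%N.
Local Notation poly0 := {mpoly K[N]}.

Definition minvar (m : 'X_{1..n.+1}) : option 'I_n.+1 :=
  [pick v : 'I_n.+1 | (0 < m v)%N && [forall w : 'I_n.+1, (w < v)%N ==> (m w == 0%N)]].

Definition liftmono (m : 'X_{1..n.+1}) : poly0 :=
  \prod_(v < n.+1) 'X_(lshift n v) ^+ m v.

Definition y0var (v : 'I_n.+1) : poly0 :=
  if unlift ord0 v is Some i then 'X_(rshift n.+1 i) else 0.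

(* derivative of a monomial, by recursion on its degree:
   (1)' = 0, (x)' = 1, (y_i)' = y_i',
   (y_i m)' = y_i' m + y_0i (m)'   when m <> 1 and y_i = min(y_i m)  *)
Fixpoint dmono (k : nat) (m : 'X_{1..n.+1}) : 'rV[poly0]_n.+1 :=
  if k is k'.+1 then
    if minvar m is Some v then
      let m1 := (m - U_(v))%MM in
      if m1 == 0%MM then delta_mx 0 v
      else liftmono m1 *: delta_mx 0 v + y0var v *: dmono k' m1
    else 0
  else 0.

Definition synder (p : {mpoly K[n.+1]}) : 'rV[poly0]_n.+1 :=
  \sum_(m <- msupp p) (p@_m)%:MP *: dmono (mdeg m) m.

Definition ethx (p : {mpoly K[n.+1]}) : poly0 := synder p 0 ord0.
Definition ethy (p : {mpoly K[n.+1]}) (i : 'I_n) : poly0 := synder p 0 (lift ord0 i).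

Definition nabla_eth (E : 'I_n -> {mpoly K[n.+1]}) : 'M[poly0]_n :=
  \matrix_(i, j) ethy (E i) j.
Definition ethxE (E : 'I_n -> {mpoly K[n.+1]}) : 'rV[poly0]_n :=
  \row_i ethx (E i).

Definition seval (sigma : 'I_n -> stream K) (p : {mpoly K[n.+1]}) : stream K :=
  mmap (@sconst K)
    (fun v : 'I_n.+1 => if unlift ord0 v is Some i then sigma i else sX K) p.

Definition seval0 (r0 : 'I_n -> K) (sigma : 'I_n -> stream K) (q : poly0) : stream K :=
  mmap (@sconst K)
    (fun w : 'I_N => match split w with
                     | inl v => if unlift ord0 v is Some i then sigma i else sX K
                     | inr i => sconst (r0 i)
                     end) q.

Definition stream_solution (E : 'I_n -> {mpoly K[n.+1]}) (sigma : 'I_n -> stream K) :=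
  forall i, seval sigma (E i) = 0.

End SynDeriv.

From HB Require Import structures.
From mathcomp Require Import all_boot all_algebra.
From mathcomp.multinomials Require Import mpoly.
From Stdlib Require Import FunctionalExtensionality.
Local Open Scope ring_scope.
Import GRing.Theory.

(* The stream derivative obeys a skewed Leibniz rule,
     (s * t)' = s' * t + s(0) * t',
   with s(0) acting as the constant stream (s(0), 0, 0, ...), and it kills
   constants while X' = 1.  The syntactic derivative of a monomial
   y_v m (y_v its least variable) is defined by exactly this rule, with the
   indeterminate y_0v standing for y_v(0) (and y_00 = 0 for x, since X(0) = 0).
   Hence, writing var_der_0 = X' = 1 and var_der_v = sigma_v' for the other
   variables, an induction on the degree of monomials and linearity give, for EVERY
   polynomial p of K[x, ybar],
     (p(X, sigma))' = sum_v  q_v(X, r0, sigma) * var_der_v   where p' = (q_v)_v.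
   For p = p_i in E the left-hand side is 0' = 0 and the right-hand side is
   the i-th entry of the matrix identity of the theorem. *)

Section StreamCalculus.
Variable K : comNzRingType.
Implicit Types (s t : stream K) (c : K).

Lemma stream_ext s t : (forall i, s i = t i) -> s = t.
Proof. by move=> eq_st; apply: functional_extensionality. Qed.

Lemma saddE s t i : (s + t) i = s i + t i. Proof. by []. Qed.
Lemma soppE s i : (- s) i = - s i. Proof. by []. Qed.
Lemma smulE s t i : (s * t) i = \sum_(j < i.+1) s j * t (i - j)%N.
Proof. by []. Qed.

Lemma sconst_mulE c s i : (sconst c * s) i = c * s i.
Proof.
rewrite smulE big_ord_recl subn0 big1 ?addr0 // => j _.
by rewrite /sconst mul0r.
Qed.

Lemma sconst_is_zmod_morphism : zmod_morphism (@sconst K).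
Proof.
move=> a b; apply: stream_ext => i; rewrite saddE soppE /sconst.
by case: (i == 0%N); rewrite ?subrr.
Qed.

HB.instance Definition _ :=
  GRing.isZmodMorphism.Build K (stream K) (@sconst K) sconst_is_zmod_morphism.

Lemma sconst_is_monoid_morphism : monoid_morphism (@sconst K).
Proof.
split=> // a b; apply: stream_ext => i; rewrite sconst_mulE /sconst.
by case: (i == 0%N); rewrite ?mulr0.
Qed.

HB.instance Definition _ :=
  GRing.isMonoidMorphism.Build K (stream K) (@sconst K) sconst_is_monoid_morphism.

Lemma sder_is_zmod_morphism : zmod_morphism (@sder K).
Proof. by move=> s t; apply: stream_ext. Qed.

HB.instance Definition _ :=
  GRing.isZmodMorphism.Build (stream K) (stream K) (@sder K) sder_is_zmod_morphism.

Lemma sder_sconst c : sder (sconst c) = 0.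
Proof. by apply: stream_ext. Qed.

Lemma sderX : sder (sX K) = 1.
Proof. by apply: stream_ext => -[|i]. Qed.

Lemma sderM s t : sder (s * t) = sder s * t + sconst (s 0%N) * sder t.
Proof.
apply: stream_ext => i.
by rewrite saddE sconst_mulE /sder !smulE big_ord_recl subn0 addrC.
Qed.

Lemma sderZ c s : sder (sconst c * s) = sconst c * sder s.
Proof. by rewrite sderM sder_sconst mul0r add0r /sconst eqxx. Qed.

End StreamCalculus.

Section ChainRule.
Variables (K : fieldType) (n : nat) (sigma : 'I_n -> stream K).

Local Notation poly0 := {mpoly K[(n.+1 + n)%N]}.
Local Notation r0 := (fun i => sigma i 0%N).
Local Notation eval0 := (seval0 r0 sigma).

Definition var_value (v : 'I_n.+1) : stream K :=
  if unlift ord0 v is Some i then sigma i else sX K.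
Definition var_der (v : 'I_n.+1) : stream K := sder (var_value v).

Lemma eval0_is_zmod_morphism : zmod_morphism eval0.
Proof. by move=> a b; rewrite /seval0 rmorphB. Qed.

HB.instance Definition _ :=
  GRing.isZmodMorphism.Build _ _ eval0 eval0_is_zmod_morphism.

Lemma eval0_is_monoid_morphism : monoid_morphism eval0.
Proof. by split=> [|a b]; rewrite /seval0 ?rmorph1 ?rmorphM. Qed.

HB.instance Definition _ :=
  GRing.isMonoidMorphism.Build _ _ eval0 eval0_is_monoid_morphism.

Lemma eval0_lshift (v : 'I_n.+1) : eval0 'X_(lshift n v) = var_value v.
Proof.
rewrite /seval0 mmapX mmap1U.
by have := unsplitK (inl v : 'I_n.+1 + 'I_n) => /= ->.
Qed.

Lemma eval0_liftmono (m : 'X_{1..n.+1}) :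
  eval0 (liftmono K m) = mmap1 var_value m.
Proof.
rewrite /liftmono rmorph_prod; apply: eq_bigr => v _.
by rewrite rmorphXn /= eval0_lshift.
Qed.

Lemma eval0_y0var (v : 'I_n.+1) : eval0 (y0var K v) = sconst (var_value v 0%N).
Proof.
rewrite /y0var /var_value; case: (unlift ord0 v) => [i|]; last first.
  by rewrite rmorph0 /sX /= rmorph0.
rewrite /seval0 mmapX mmap1U.
by have := unsplitK (inr i : 'I_n.+1 + 'I_n) => /= ->.
Qed.

Definition pair_der (d : 'rV[poly0]_n.+1) : stream K :=
  \sum_(v < n.+1) eval0 (d 0 v) * var_der v.

Lemma pair_derD (d e : 'rV[poly0]_n.+1) : pair_der (d + e) = pair_der d + pair_der e.
Proof.
by rewrite /pair_der -big_split; apply: eq_bigr => v _; rewrite mxE rmorphD mulrDl.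
Qed.

Lemma pair_der_sum (I : Type) (r : seq I) (F : I -> 'rV[poly0]_n.+1) :
  pair_der (\sum_(x <- r) F x) = \sum_(x <- r) pair_der (F x).
Proof.
apply: (big_morph _ pair_derD).
by rewrite /pair_der big1 // => v _; rewrite mxE rmorph0 mul0r.
Qed.

Lemma pair_derZ (c : poly0) (d : 'rV[poly0]_n.+1) :
  pair_der (c *: d) = eval0 c * pair_der d.
Proof.
by rewrite /pair_der mulr_sumr; apply: eq_bigr => v _; rewrite mxE rmorphM mulrA.
Qed.

Lemma pair_der_delta (v : 'I_n.+1) : pair_der (delta_mx 0 v) = var_der v.
Proof.
rewrite /pair_der (bigD1 v) //= big1 ?addr0 => [|w /negbTE ne_wv].
  by rewrite mxE !eqxx rmorph1 mul1r.
by rewrite mxE ne_wv andbF rmorph0 mul0r.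
Qed.

Lemma minvar_some (m : 'X_{1..n.+1}) : m != 0%MM ->
  exists2 v, minvar m = Some v & (0 < m v)%N.
Proof.
move=> nz_m; rewrite /minvar; case: pickP => [v /andP[m_v _]|no_min].
  by exists v.
case/eqP: nz_m; apply/mnmP => v; rewrite mnm0E.
elim/ltn_ind: (v : nat) {-2}v (erefl (v : nat)) => k IH w def_k.
move: (no_min w); apply: contraFeq => nz_w; rewrite lt0n nz_w /=.
apply/forallP => u; apply/implyP => lt_uw; apply/eqP.
by apply: (IH u) => //; rewrite -def_k.
Qed.

(* The chain rule for monomials, by induction on the degree: the syntactic
   derivative mirrors the Leibniz rule sderM, peeling off the least variable. *)
Lemma sder_monomial (m : 'X_{1..n.+1}) :
  sder (mmap1 var_value m) = pair_der (dmono K (mdeg m) m).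
Proof.
move: {2 3}(mdeg m) (erefl (mdeg m)) => k; elim: k m => [|k IH] m deg_m /=.
  move/eqP: deg_m; rewrite mdeg_eq0 => /eqP ->.
  by rewrite mmap11 (sder_sconst _ 1) /pair_der
    big1 // => v _; rewrite mxE rmorph0 mul0r.
have nz_m : m != 0%MM by rewrite -mdeg_eq0 deg_m.
have [v -> m_v] := minvar_some _ nz_m.
set m1 := (m - U_(v))%MM.
have def_m : m = (m1 + U_(v))%MM.
  by rewrite submK //; apply/mnm_lepP => u; rewrite mnm1E; case: eqP => [<-|].
have deg_m1 : mdeg m1 = k.
  by move: deg_m; rewrite def_m mdegD mdeg1 addn1 => -[].
have -> : mmap1 var_value m = var_value v * mmap1 var_value m1.
  by rewrite def_m commr_mmap1_M ?mmap1U 1?mulrC // => i x; apply: mulrC.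
rewrite sderM; case: eqP => [-> | _].
  by rewrite mmap11 (sder_sconst _ 1) mulr0 addr0 mulr1 pair_der_delta.
rewrite pair_derD !pair_derZ pair_der_delta -IH // eval0_liftmono eval0_y0var.
by rewrite mulrC.
Qed.

Lemma sder_seval (p : {mpoly K[n.+1]}) :
  sder (seval sigma p) = pair_der (synder p).
Proof.
rewrite /seval /mmap raddf_sum /synder pair_der_sum; apply: eq_bigr => m _.
rewrite /= sderZ pair_derZ sder_monomial; congr (_ * _).
by rewrite /seval0 mmapC.
Qed.

End ChainRule.

Theorem lemma3p6 (K : fieldType) (charK0 : [pchar K] =i pred0) (n : nat)
  (E : 'I_n -> {mpoly K[n.+1]}) (sigma : 'I_n -> stream K) :
  stream_solution E sigma ->
  let r0 : 'I_n -> K := fun i => sigma i 0%N in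
  map_mx (seval0 r0 sigma) (nabla_eth E) *m (\row_j sder (sigma j))^T
    + (map_mx (seval0 r0 sigma) (ethxE E))^T = 0.
Proof.
move=> sol r0; apply/matrixP => i j; rewrite !mxE.
(* Differentiate the equation p_i(X, sigma) = 0 with the chain rule. *)
transitivity (sder (seval sigma (E i))); last by rewrite sol raddf0.
rewrite sder_seval /pair_der big_ord_recl /var_der /var_value unlift_none sderX.
rewrite mulr1 addrC; congr (_ + _).
by apply: eq_bigr => k _; rewrite !mxE /ethy liftK.
Qed.
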